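(* Let $\boldsymbol\nu=\{\nu_t\}_{t>0}$ be a measurable factorizing family over $[0,1]\times\{\ast\}$. Fix $s,t>0$, set $u=\lambda(s+t)$, $u_1=\lambda s$, $u_2=\lambda t$, and assume that for all sufficiently small $u$: (A) under $\nu_u(\cdot\mid Z\neq\varnothing)$ the anchor $\alpha_u(Z)$ is uniform on $(0,u)$; (D) $\nu_u(\mathrm{diam}_u(Z)\ge u^2\mid Z\neq\varnothing)\le u$. Let $E_{10}=\{Z\cap[0,u_1]\neq\varnothing,\ Z\cap(u_1,u]=\varnothing\}$, $E_{01}=\{Z\cap[0,u_1]=\varnothing,\ Z\cap[u_1,u]\neq\varnothing\}$, $R_{0,u_1}(Z)=Z\cap[0,u_1]$, $R_{u_1,u}(Z)=(Z\cap[u_1,u])-u_1$; let $\widehat\nu_u^{10}$ be the law of $R_{0,u_1}(Z)$ under $\nu_u(\cdot\mid E_{10})$, $\widehat\nu_u^{01}$ the law of $R_{u_1,u}(Z)$ under $\nu_u(\cdot\mid E_{01})$, $\bar\nu_u^{(u_1)}$ the law of $R_{0,u_1}(Z)$ under $\nu_u(\cdot\mid R_{0,u_1}(Z)\neq\varnothing)$, and $\bar\nu_u^{(u_2)}$ the law of $R_{u_1,u}(Z)$ under $\nu_u(\cdot\mid R_{u_1,u}(Z)\neq\varnothing)$. Then there is $C_{s,t}<\infty$ such that for all sufficiently small $\lambda>0$, $\|\widehat\nu_u^{10}-\bar\nu_u^{(u_1)}\|_{\mathrm{TV}}\le C_{s,t}u$ and $\|\widehat\nu_u^{01}-\bar\nu_u^{(u_2)}\|_{\mathrm{TV}}\le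 C_{s,t}u$.
   Context: $\mathscr C_t^{\{\ast\}}$ is the space of closed subsets of $[0,t]$ with Borel $\sigma$-field $\Sigma_t$ of the Fell topology; $\oplus_{s,t}(Z_1,Z_2)=Z_1\cup(s+Z_2)$; $\sigma_t(Z)=\{r/t:r\in Z\}$. A measurable factorizing family over $[0,1]\times\{\ast\}$ is a family of probability measures $\nu_t$ on $\mathscr C_t^{\{\ast\}}$ with: (i) $\nu_{s+t}$ and $(\nu_s\otimes\nu_t)\circ\oplus_{s,t}^{-1}$ mutually absolutely continuous; (ii) $\nu_t(\{Z:r\in Z\})=0$ for all $r\in[0,t]$; (iii) no $\nu_t$ supported on finitely many atoms; (iv a) a countable ring $\mathcal R\subset\Sigma_1$ generating $\Sigma_1$ with $t\mapsto(\sigma_t)_*\nu_t(A)$ Borel for $A\in\mathcal R$; (iv b) a Borel $\Delta$ on $(0,\infty)^2\times\mathscr C_1^{\{\ast\}}$ with $\Delta(s,t,\sigma_{s+t}(Z))=d((\nu_s\otimes\nu_t)\circ\oplus_{s,t}^{-1})/d\nu_{s+t}(Z)$ a.e. Anchor: $\alpha_u(Z)=\inf Z$ ($0$ if empty); spread: $\mathrm{diam}_u(Z)=\sup Z-\inf Z$ ($0$ if empty). $\|\rho-\eta\|_{\mathrm{TV}}=\sup_A|\rho(A)-\eta(A)|$. *)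

From HB Require Import structures.
From mathcomp Require Import all_boot all_order all_algebra.
From mathcomp Require Import all_classical all_reals all_analysis.
From mathcomp Require Import measurable_realfun.
Unset Printing Implicit Defensive.
Import Order.TTheory GRing.Theory Num.Theory.
Import numFieldNormedType.Exports.
Local Open Scope classical_set_scope.
Local Open Scope ring_scope.

Section ClosedSubsets.
Context {R : realType}.

Definition is_Ct (t : R) (Z : set R) : Prop :=
  closed Z /\ Z `<=` [set x | 0 <= x <= t].

Lemma is_Ct0 (t : R) : is_Ct t set0.
Proof. by split; [exact: closed0 | exact: sub0set]. Qed.

Definition Ct0 (t : R) := {Z : set R | is_Ct t Z}.

HB.instance Definition _ t := gen_eqMixin (Ct0 t).
HB.instance Definition _ t := gen_choiceMixin (Ct0 t).
HB.instance Definition _ t := isPointed.Build (Ct0 t) (exist _ set0 (is_Ct0 t)).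

(* Subbase of the Fell topology on the closed subsets of X = [0,t]:
   {F | F ∩ K = ∅} for K compact in X, and {F | F ∩ V ≠ ∅} for V open in X
   (the open sets of X are the traces U ∩ [0,t] of open sets U of R). *)
Definition fell_subbase (t : R) : set (set (Ct0 t)) :=
  [set B | (exists K : set R, [/\ compact K, K `<=` [set x | 0 <= x <= t] &
              B = [set F : Ct0 t | proj1_sig F `&` K = set0]])
        \/ (exists U : set R, open U /\
              B = [set F : Ct0 t | proj1_sig F `&` (U `&` [set x | 0 <= x <= t]) !=set0])].

Definition fell_open (t : R) : set (set (Ct0 t)) :=
  [set O | forall F, O F -> exists (n : nat) (B : nat -> set (Ct0 t)),
      [/\ forall i, (i < n)%N -> fell_subbase t (B i),
          forall i, (i < n)%N -> B i F &
          forall G, (forall i, (i < n)%N -> B i G) -> O G]].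

Definition Ct (t : R) := g_sigma_algebraType (fell_open t).

Definition cval {t : R} (Z : Ct t) : set R := proj1_sig (Z : Ct0 t).

(* the element of C_t with underlying set Z (if Z is a closed subset of [0,t]);
   the empty set otherwise (only used on valid inputs) *)
Definition mkC (t : R) (Z : set R) : Ct t :=
  match pselect (is_Ct t Z) with
  | left h => exist _ Z h
  | right _ => exist _ set0 (is_Ct0 t)
  end.

Definition oplus (s t : R) (p : Ct s * Ct t) : Ct (s + t) :=
  mkC (s + t) (cval p.1 `|` [set s + r | r in cval p.2]).

Definition sigmat {t : R} (Z : Ct t) : Ct 1 :=
  mkC 1 [set r / t | r in cval Z].

Definition measurable_factorizing_family
    (nu : forall t : R, probability (Ct t) R) : Prop :=
  [/\
      (forall s t : R, 0 < s -> 0 < t ->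
         nu (s + t) `<< pushforward ((nu s) \x (nu t))%E (oplus s t) /\
         pushforward ((nu s) \x (nu t))%E (oplus s t) `<< nu (s + t)),
      (forall t : R, 0 < t -> forall r : R, 0 <= r <= t ->
         nu t [set Z : Ct t | cval Z r] = 0%E),
      (forall t : R, 0 < t ->
         ~ exists S : set (Ct t), finite_set S /\ nu t S = 1%E),
      (exists Rg : set (set (Ct 1)),
         [/\ countable Rg, setring Rg, Rg `<=` measurable,
             <<s Rg >> = measurable &
             forall A, Rg A ->
               measurable_fun [set t : R | 0 < t]
                 (fun t : R => nu t (@sigmat t @^-1` A))]) &
      (exists Delta : R * R * Ct 1 -> R,
         measurable_fun [set x : R * R * Ct 1 | 0 < x.1.1 /\ 0 < x.1.2] Delta /\
         forall s t : R, 0 < s -> 0 < t -> forall A : set (Ct (s + t)),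
           measurable A ->
           pushforward ((nu s) \x (nu t))%E (oplus s t) A =
           (\int[nu (s + t)%R]_(Z in A) (Delta (s, t, sigmat Z))%:E)%E)].

Definition anchor {t : R} (Z : Ct t) : R :=
  if pselect (cval Z = set0) then 0 else inf (cval Z).
Definition spread {t : R} (Z : Ct t) : R :=
  if pselect (cval Z = set0) then 0 else sup (cval Z) - inf (cval Z).

(* restrictions R_{0,u1} : C_u -> C_{u1} and R_{u1,u} : C_u -> C_{u2} (u2 = u - u1) *)
Definition restr0 (u1 u : R) (Z : Ct u) : Ct u1 :=
  mkC u1 (cval Z `&` [set x | 0 <= x <= u1]).
Definition restr1 (u1 u2 u : R) (Z : Ct u) : Ct u2 :=
  mkC u2 [set r - u1 | r in cval Z `&` [set x | u1 <= x <= u]].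

Definition nonemptyC (t : R) : set (Ct t) := [set Z | cval Z !=set0].
Definition E10 (u1 u : R) : set (Ct u) :=
  [set Z | cval Z `&` [set x | 0 <= x <= u1] !=set0 /\
           cval Z `&` [set x | u1 < x <= u] = set0].
Definition E01 (u1 u : R) : set (Ct u) :=
  [set Z | cval Z `&` [set x | 0 <= x <= u1] = set0 /\
           cval Z `&` [set x | u1 <= x <= u] !=set0].

End ClosedSubsets.

Section Conditioning.
Context {d : measure_display} {T : measurableType d} {R : realType}.

Definition condP (mu : set T -> \bar R) (E B : set T) : R :=
  fine (mu (E `&` B)) / fine (mu E).

Definition cond_law {d'} {T' : measurableType d'} (mu : set T -> \bar R)
    (E : set T) (f : T -> T') : set T' -> R :=
  fun A => condP mu E (f @^-1` A).

End Conditioning.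

Definition TV {d} {T : measurableType d} {R : realType} (rho eta : set T -> R) : R :=
  sup [set `|rho A - eta A| | A in (measurable : set (set T))].

From HB Require Import structures.
From mathcomp Require Import all_boot all_order all_algebra.
From mathcomp Require Import all_classical all_reals all_analysis.
From mathcomp Require Import measurable_realfun.
From mathcomp Require Import lra ring.
Import Order.TTheory GRing.Theory Num.Theory.
Import numFieldNormedType.Exports.
Local Open Scope classical_set_scope.
Local Open Scope ring_scope.

(* Since E10 is contained in {Z hits [0,u1]}, conditioning on E10 instead of on
   that larger event moves the law of the restriction by at most
   P(hits [0,u1] \ E10) / P(hits [0,u1]) in total variation.  A set in the
   difference has points on both sides of u1, so its anchor lies in
   [u1 - u^2, u1] or its spread is at least u^2; by (A) and (D) each of these has
   probability at most u P(Z nonempty), while (A) gives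
   P(hits [0,u1]) >= (u1/u) P(Z nonempty).  The distance is thus at most
   2u^2/u1 = O(u), and symmetrically for E01 and u2.  The events and the
   restriction maps are measurable because the Fell sigma-field is generated by
   the countably many events {Z hits [p,q]}, p, q rational. *)

Section HitMiss.
Context {R : realType}.

Lemma closed_segment (a b : R) : closed [set x : R | a <= x <= b].
Proof. by rewrite -set_itvcc; exact: itv_closed. Qed.

Lemma closed_preimage_addr (c : R) (A : set R) : closed A -> closed [set x | A (x + c)].
Proof.
have addc_cont : continuous (fun x : R => x + c).
  by move=> x; apply: cvgD; [exact: cvg_id | exact: cvg_cst].
by move/continuous_closedP : addc_cont; apply.
Qed.

Definition hits {t : R} (A : set R) : set (Ct t) := [set Z | cval Z `&` A !=set0].
Definition misses {t : R} (A : set R) : set (Ct t) := [set Z | cval Z `&` A = set0].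

Lemma cvalP {t : R} (Z : Ct t) : is_Ct t (cval Z).
Proof. exact: (proj2_sig (Z : Ct0 t)). Qed.

Lemma cval_closed {t : R} (Z : Ct t) : closed (cval Z).
Proof. exact: (cvalP Z).1. Qed.

Lemma cval_sub {t : R} {Z : Ct t} {x : R} : cval Z x -> 0 <= x <= t.
Proof. by move=> Zx; have [_ /(_ x Zx)] := cvalP Z. Qed.

Lemma mkCE (t : R) (Z : set R) : is_Ct t Z -> cval (mkC t Z) = Z.
Proof. by move=> hZ; rewrite /mkC; case: pselect. Qed.

Lemma setC_misses {t : R} (A : set R) : ~` @misses t A = hits A.
Proof. by apply/seteqP; split => Z /= h; [apply/set0P/eqP | apply/eqP/set0P]. Qed.

Lemma setC_hits {t : R} (A : set R) : ~` @hits t A = misses A.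
Proof. by rewrite -setC_misses setCK. Qed.

Lemma misses_setC {t : R} (A : set R) (Z : Ct t) : misses (~` A) Z <-> cval Z `<=` A.
Proof.
split => [ZA x Zx|ZA]; last by apply/seteqP; split => // x [/ZA].
by apply: contrapT => nAx; have : (cval Z `&` ~` A) x by []; rewrite ZA.
Qed.

Lemma hits_trace {t : R} (A : set R) :
  @hits t A = hits (A `&` [set x | 0 <= x <= t]).
Proof.
apply/seteqP; split => Z [x [Zx Ax]]; last by exists x; case: Ax.
by exists x; split; last split; [| | exact: cval_sub Zx].
Qed.

Lemma fell_subbase_measurable (t : R) (B : set (Ct t)) :
  fell_subbase t B -> measurable B.
Proof.
move=> hB; apply: sub_sigma_algebra => F BF.
by exists 1%N, (fun _ => B); split => // G /(_ 0%N isT).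
Qed.

Lemma measurable_hits_open (t : R) (U : set R) : open U -> measurable (@hits t U).
Proof.
move=> oU; rewrite hits_trace; apply: fell_subbase_measurable.
by right; exists U.
Qed.

Lemma measurable_misses_closed (t : R) (K : set R) : closed K ->
  measurable (@misses t K).
Proof.
move=> cK; rewrite -setC_hits hits_trace setC_hits.
have -> : K `&` [set x | 0 <= x <= t] = `[0, t]%classic `&` K.
  by rewrite setIC; congr (_ `&` _); apply/seteqP; split => x; rewrite /= in_itv.
apply: fell_subbase_measurable; left; exists (`[0, t]%classic `&` K); split => //.
exact: compact_closedI (@segment_compact _ 0 t) cK.
Qed.

Lemma measurable_hits_closed (t : R) (K : set R) : closed K ->
  measurable (@hits t K).
Proof.
by move=> cK; rewrite -setC_misses; apply: measurableC; exact: measurable_misses_closed.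
Qed.

Lemma measurable_misses_open (t : R) (U : set R) : open U ->
  measurable (@misses t U).
Proof. by move=> oU; rewrite -setC_hits; apply: measurableC; exact: measurable_hits_open. Qed.

End HitMiss.

Section FellMeasurableMaps.
Context {R : realType}.

Definition ratseg (p : rat * rat) : set R := `[ratr p.1, ratr p.2]%classic.

Definition fell_basic {t : R} (q : seq (rat * rat) * seq (rat * rat)) : set (Ct t) :=
  \bigcap_(p in [set` q.1]) misses (ratseg p) `&`
  \bigcap_(p in [set` q.2]) hits (ratseg p).

Lemma ratseg_nbhs {U : set R} {x : R} : open U -> U x ->
  exists2 p, ratr p.1 < x < ratr p.2 & ratseg p `<=` U.
Proof.
move=> oU Ux; have /nbhs_ballP[e /= e0 eU] : nbhs x U by exact: open_nbhs_nbhs.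
have [q1] : exists q : rat, ratr q \in `]x - e, x[ by apply: rat_in_itvoo; lra.
have [q2] : exists q : rat, ratr q \in `]x, x + e[ by apply: rat_in_itvoo; lra.
rewrite !in_itv /= => /andP[lo2 hi2] /andP[lo1 hi1].
exists (q1, q2) => /=; first by rewrite hi1 lo2.
move=> y; rewrite /ratseg /= in_itv /= => /andP[y1 y2]; apply: eU.
by rewrite ball_itv /= in_itv /=; apply/andP; split; lra.
Qed.

Lemma ratseg_cover {F K : set R} : closed F -> compact K -> F `&` K = set0 ->
  exists s : seq (rat * rat), (forall p, p \in s -> F `&` ratseg p = set0) /\
    K `<=` \bigcup_(p in [set` s]) ratseg p.
Proof.
move=> cF; rewrite compact_cover => cK FK.
pose D := [set p : rat * rat | F `&` ratseg p = set0].
have [|x Kx|D' D'D KD'] := cK _ D (fun p => `]ratr p.1, ratr p.2[%classic).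
- by move=> p _; exact: itv_open.
- have [p px pF] : exists2 p, ratr p.1 < x < ratr p.2 & ratseg p `<=` ~` F.
    apply: ratseg_nbhs; first exact: closed_openC.
    by move=> Fx; suff : (F `&` K) x by rewrite FK.
  exists p; last by rewrite /= in_itv.
  by apply/seteqP; split => // y [Fy /pF].
- exists (finmap.enum_fset D'); split; first by move=> p /D'D; rewrite inE.
  move=> x /KD' [p D'p px]; exists p => //.
  exact: subset_itv_oo_cc.
Qed.

Lemma fell_subbase_basic {t : R} {B : set (Ct t)} {F : Ct t} :
  fell_subbase t B -> B F -> exists q, fell_basic q F /\ fell_basic q `<=` B.
Proof.
case=> [[K [cK _ ->]] | [U [oU ->]]] /= BF.
- have [s [sF Ks]] := ratseg_cover (cval_closed F) cK BF.
  exists (s, [::]); split; first by split => [p /sF|p].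
  move=> G [GK _]; apply/seteqP; split => // x [Gx /Ks [p sp px]].
  by have : (cval G `&` ratseg p) x by []; rewrite (GK p sp).
- case: BF => x [Fx [Ux _]]; have [p px pU] := ratseg_nbhs oU Ux.
  exists ([::], [:: p]); split.
    split => // p'; rewrite /= inE => /eqP ->; exists x; split => //.
    by rewrite /ratseg /= in_itv /=; case/andP: px => *; apply/andP; split; apply: ltW.
  move=> G [_ /(_ p (mem_head _ _)) [y [Gy py]]].
  by exists y; split => //; split; [exact: pU | exact: cval_sub Gy].
Qed.

Lemma fell_basic_cat (t : R) q q' :
  @fell_basic t (q.1 ++ q'.1, q.2 ++ q'.2) = fell_basic q `&` fell_basic q'.
Proof.
have set_cat (s s' : seq (rat * rat)) : [set` s ++ s'] = [set` s] `|` [set` s'].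
  by apply/seteqP; split => p /=; rewrite mem_cat => /orP.
by rewrite /fell_basic /= !set_cat !bigcap_setU setIACA.
Qed.

Lemma fell_open_basic {t : R} {O : set (Ct t)} {F : Ct t} : fell_open t O -> O F ->
  exists q, fell_basic q F /\ fell_basic q `<=` O.
Proof.
move=> /[apply] [[n [B [Bsub BF BO]]]].
have : forall m, (m <= n)%N ->
    exists q, fell_basic q F /\ forall i, (i < m)%N -> fell_basic q `<=` B i.
  elim=> [|m IH] mn; first by exists ([::], [::]).
  have [q [Fq qB]] := IH (ltnW mn).
  have [q' [Fq' q'B]] := fell_subbase_basic (Bsub m mn) (BF m mn).
  exists (q.1 ++ q'.1, q.2 ++ q'.2); rewrite fell_basic_cat; split => // i.
  by rewrite ltnS leq_eqVlt => /orP[/eqP -> | im] G [Gq Gq']; [exact: q'B | exact: qB].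
move=> /(_ n (leqnn n)) [q [Fq qB]].
by exists q; split => // G Gq; apply: BO => i /qB; apply.
Qed.

Lemma measurable_fun_Ct (v w : R) (f : Ct v -> Ct w) :
  (forall p, measurable (f @^-1` hits (ratseg p))) -> measurable_fun setT f.
Proof.
move=> mf.
have mbasic q : measurable (f @^-1` fell_basic q).
  rewrite preimage_setI !preimage_bigcap.
  apply: measurableI; apply: fin_bigcap_measurable; try exact: finite_seq.
  - by move=> p _; rewrite -setC_hits -preimage_setC; exact: measurableC.
  - by move=> p _; exact: mf.
apply: (@measurability _ _ _ _ setT f (fell_open w)) => // _ [Op wO <-]; rewrite setTI.
pose Oq q : set (Ct w) := if pselect (fell_basic q `<=` Op) then fell_basic q else set0.
have -> : f @^-1` Op = \bigcup_q f @^-1` Oq q.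
  apply/seteqP; split => [Z /(fell_open_basic wO) [q [Fq qO]] | Z [q _]].
    by exists q => //; rewrite /Oq; case: pselect.
  by rewrite /Oq; case: pselect => // qO /qO.
apply: countable_bigcupT_measurable; first exact: countableP.
by move=> q; rewrite /Oq; case: pselect => qOp; [exact: mbasic | rewrite preimage_set0].
Qed.

End FellMeasurableMaps.

Section Restrictions.
Context {R : realType}.

Lemma closed_ratseg (p : rat * rat) : closed (@ratseg R p).
Proof. exact: itv_closed. Qed.

Lemma restr0E (u1 u : R) (Z : Ct u) :
  cval (restr0 u1 u Z) = cval Z `&` [set x | 0 <= x <= u1].
Proof.
rewrite /restr0 mkCE //; split; last by move=> x [].
exact: closedI (cval_closed Z) (closed_segment _ _).
Qed.

Lemma restr1E (u1 u2 u : R) (Z : Ct u) : u <= u1 + u2 ->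
  cval (restr1 u1 u2 u Z) = [set r - u1 | r in cval Z `&` [set x | u1 <= x <= u]].
Proof.
move=> hu; rewrite /restr1 mkCE //; split.
  have -> : [set r - u1 | r in cval Z `&` [set x | u1 <= x <= u]] =
      (fun y => y + u1) @^-1` (cval Z `&` [set x | u1 <= x <= u]).
    apply/seteqP; split => [_ [r Zr <-]|y Zy]; first by rewrite /= subrK.
    by exists (y + u1) => //; rewrite addrK.
  apply: closed_preimage_addr.
  exact: closedI (cval_closed Z) (closed_segment _ _).
by move=> _ [r [_ /andP[r1 r2]] <-] /=; apply/andP; split; lra.
Qed.

Lemma preimage_restr0_hits (u1 u : R) (A : set R) :
  restr0 u1 u @^-1` hits A = hits ([set x | 0 <= x <= u1] `&` A).
Proof. by apply/seteqP; split => Z; rewrite /hits /= restr0E setIA. Qed.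

Lemma preimage_restr1_hits (u1 u2 u : R) (A : set R) : u <= u1 + u2 ->
  restr1 u1 u2 u @^-1` hits A =
  hits ([set x | u1 <= x <= u] `&` [set x | A (x - u1)]).
Proof.
move=> hu; apply/seteqP; split => Z; rewrite /hits /= restr1E //.
  by move=> [_ [[r [Zr ru] <-] Ar]]; exists r.
by move=> [r [Zr [ru Ar]]]; exists (r - u1); split => //; exists r.
Qed.

Lemma measurable_restr0 (u1 u : R) : measurable_fun setT (restr0 u1 u).
Proof.
apply: measurable_fun_Ct => p; rewrite preimage_restr0_hits.
by apply: measurable_hits_closed; exact: closedI (closed_segment _ _) (closed_ratseg _).
Qed.

Lemma measurable_restr1 (u1 u2 u : R) : u <= u1 + u2 ->
  measurable_fun setT (restr1 u1 u2 u).
Proof.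
move=> hu; apply: measurable_fun_Ct => p; rewrite preimage_restr1_hits //.
apply: measurable_hits_closed; apply: closedI (closed_segment _ _) _.
exact: closed_preimage_addr (- u1) _ (closed_ratseg p).
Qed.

Lemma restr0_nonempty (u1 u : R) :
  [set Z : Ct u | cval (restr0 u1 u Z) !=set0] = hits [set x | 0 <= x <= u1].
Proof. by apply/seteqP; split => Z; rewrite /hits /= restr0E. Qed.

Lemma restr1_nonempty (u1 u2 u : R) : u <= u1 + u2 ->
  [set Z : Ct u | cval (restr1 u1 u2 u Z) !=set0] = hits [set x | u1 <= x <= u].
Proof.
move=> hu; apply/seteqP; split => Z; rewrite /hits /= restr1E //.
  by move=> [_ [r Zr _]]; exists r.
by move=> [r Zr]; exists (r - u1); exists r.
Qed.

End Restrictions.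

Section AnchorSpread.
Context {R : realType} {u : R}.
Implicit Types (Z : Ct u) (a b c : R).

Lemma has_lbound_cval Z : has_lbound (cval Z).
Proof. by exists 0 => x /cval_sub /andP[]. Qed.

Lemma has_ubound_cval Z : has_ubound (cval Z).
Proof. by exists u => x /cval_sub /andP[]. Qed.

Lemma anchorE Z : cval Z !=set0 -> anchor Z = inf (cval Z).
Proof. by move=> /set0P/eqP Z0; rewrite /anchor; case: pselect. Qed.

Lemma spreadE Z : cval Z !=set0 -> spread Z = sup (cval Z) - inf (cval Z).
Proof. by move=> /set0P/eqP Z0; rewrite /spread; case: pselect. Qed.

Lemma anchor_in {Z} : cval Z !=set0 -> cval Z (anchor Z).
Proof.
move=> Z0; rewrite anchorE //; apply: (itv_closed_infimums Z0 (cval_closed Z)).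
by split; [exact: ge_inf (has_lbound_cval Z) | move=> x; exact: lb_le_inf].
Qed.

Lemma anchor_le {Z x} : cval Z x -> anchor Z <= x.
Proof. by move=> Zx; rewrite anchorE; [exact: (ge_inf (has_lbound_cval Z) Zx) | exists x]. Qed.

Lemma anchor_ge Z a : cval Z !=set0 -> lbound (cval Z) a -> a <= anchor Z.
Proof. by move=> Z0 aZ; rewrite anchorE //; exact: lb_le_inf. Qed.

Lemma spread_ge {Z x y} : cval Z x -> cval Z y -> y - x <= spread Z.
Proof.
move=> Zx Zy; rewrite spreadE; last by exists x.
apply: lerB; first exact: (ub_le_sup (has_ubound_cval Z) Zy).
exact: (ge_inf (has_lbound_cval Z) Zx).
Qed.

Lemma spread_le Z a b : cval Z !=set0 -> cval Z `<=` [set x | a <= x <= b] ->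
  spread Z <= b - a.
Proof.
move=> Z0 Zab; rewrite spreadE //; apply: lerB.
  by apply: ge_sup => // x /Zab /andP[].
by apply: lb_le_inf => // x /Zab /andP[].
Qed.

Lemma nonemptyC_hitsT : nonemptyC u = hits setT.
Proof. by apply/seteqP; split => Z; rewrite /hits /= setIT. Qed.

Lemma measurable_nonemptyC : measurable (nonemptyC u).
Proof. by rewrite nonemptyC_hitsT; apply: measurable_hits_closed; exact: closedT. Qed.

Lemma anchor_itvcc_hits a b :
  nonemptyC u `&` anchor @^-1` `[a, b] `<=` hits [set x | a <= x <= b].
Proof.
by move=> Z [Z0]; rewrite /= in_itv => abZ; exists (anchor Z); split; [exact: anchor_in|].
Qed.

Lemma nonemptyC_anchor_itvcc a b : 0 <= b ->
  nonemptyC u `&` anchor @^-1` `[a, b] =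
  hits [set x | 0 <= x <= b] `&` misses [set x | x < a].
Proof.
move=> b0; apply/seteqP; split => Z.
  move=> [Z0]; rewrite /= in_itv /= => /andP[aZ Zb]; split.
    exists (anchor Z); split; first exact: anchor_in.
    by have /cval_sub/andP[z0 _] := anchor_in Z0; rewrite /= z0 Zb.
  apply/seteqP; split => // x [Zx xa]; have := anchor_le Zx; rewrite /= in xa; lra.
move=> [[x [Zx /andP[_ xb]]] Za]; have Z0 : cval Z !=set0 by exists x.
split => //; rewrite /= in_itv /=; apply/andP; split; last exact: le_trans (anchor_le Zx) xb.
apply: anchor_ge => // z Zz; rewrite leNgt; apply/negP => za.
by have : (cval Z `&` [set x | x < a]) z by []; rewrite Za.
Qed.

Lemma measurable_anchor_itvcc a b : 0 <= b ->
  measurable (nonemptyC u `&` anchor @^-1` `[a, b]).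
Proof.
move=> b0; rewrite nonemptyC_anchor_itvcc //; apply: measurableI.
  by apply: measurable_hits_closed; exact: closed_segment.
by apply: measurable_misses_open; exact: open_lt.
Qed.

Lemma spread_lt_ratitv {Z c} : cval Z !=set0 -> spread Z < c ->
  exists2 p : rat * rat, ratr p.2 - ratr p.1 < c & cval Z `<=` `]ratr p.1, ratr p.2[.
Proof.
move=> Z0; rewrite spreadE // => Zc; set e := (c - (sup (cval Z) - inf (cval Z))) / 2.
have e0 : 0 < e by rewrite divr_gt0 // subr_gt0.
have [q1] : exists q : rat, ratr q \in `]inf (cval Z) - e, inf (cval Z)[.
  by apply: rat_in_itvoo; lra.
have [q2] : exists q : rat, ratr q \in `]sup (cval Z), sup (cval Z) + e[.
  by apply: rat_in_itvoo; lra.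
rewrite !in_itv /= => /andP[lo2 hi2] /andP[lo1 hi1].
exists (q1, q2) => /=; first by rewrite /e in lo1 hi2; lra.
move=> z Zz; rewrite /= in_itv /=; apply/andP; split.
  by apply: lt_le_trans hi1 _; exact: (ge_inf (has_lbound_cval Z) Zz).
by apply: le_lt_trans lo2; exact: (ub_le_sup (has_ubound_cval Z) Zz).
Qed.

Lemma measurable_spread_ge c :
  measurable (nonemptyC u `&` [set Z | c <= spread Z]).
Proof.
pose V (p : rat * rat) : set (Ct u) :=
  if ratr p.2 - ratr p.1 < c then misses (~` `]ratr p.1, ratr p.2[) else set0.
have -> : nonemptyC u `&` [set Z | c <= spread Z] =
    nonemptyC u `&` ~` \bigcup_p V p.
  apply/seteqP; split => Z [Z0 /= Zc]; split => //.
    move=> [p _]; rewrite /V; case: ifP => // pc /misses_setC Zp.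
    suff : spread Z <= ratr p.2 - ratr p.1 by lra.
    apply: spread_le => // x /Zp.
    by rewrite /= in_itv /= => /andP[/ltW -> /ltW ->].
  rewrite leNgt; apply/negP => /(spread_lt_ratitv Z0) [p pc Zp]; apply: Zc.
  by exists p => //; rewrite /V pc; exact/misses_setC.
apply: measurableI; first exact: measurable_nonemptyC.
apply: measurableC; apply: countable_bigcupT_measurable; first exact: countableP.
move=> p; rewrite /V; case: ifP => _ //.
by apply: measurable_misses_closed; apply: open_closedC; exact: itv_open.
Qed.

Definition near_or_wide (a c : R) : set (Ct u) :=
  nonemptyC u `&` anchor @^-1` `[a - c, a] `|` nonemptyC u `&` [set Z | c <= spread Z].

Lemma measurable_near_or_wide a c : 0 <= a -> measurable (near_or_wide a c).
Proof.
move=> a0; apply: measurableU; first exact: measurable_anchor_itvcc.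
exact: measurable_spread_ge.
Qed.

Lemma straddle_near_or_wide Z a c x y :
  cval Z x -> x <= a -> cval Z y -> a <= y -> near_or_wide a c Z.
Proof.
move=> Zx xa Zy ay; have Z0 : cval Z !=set0 by exists x.
have [ca|ac] := leP (a - c) (anchor Z).
  by left; split => //; rewrite /= in_itv /= ca (le_trans (anchor_le Zx) xa).
by right; split => //=; have := spread_ge (anchor_in Z0) Zy; lra.
Qed.

Lemma measurable_E10 u1 : measurable (E10 u1 u).
Proof.
have -> : E10 u1 u = hits [set x | 0 <= x <= u1] `&` misses [set x | u1 < x].
  apply/seteqP; split => Z [Z1 Zu]; split => //; apply/seteqP; split => // x [Zx x1].
    have : (cval Z `&` [set x | u1 < x <= u]) x.
      by split => //; rewrite /= x1; case/andP: (cval_sub Zx).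
    by rewrite Zu.
  have : (cval Z `&` [set x | u1 < x]) x by split => //; case/andP: x1.
  by rewrite Zu.
apply: measurableI; first by apply: measurable_hits_closed; exact: closed_segment.
by apply: measurable_misses_open; exact: open_gt.
Qed.

Lemma measurable_E01 u1 : measurable (E01 u1 u).
Proof.
apply: measurableI; first by apply: measurable_misses_closed; exact: closed_segment.
by apply: measurable_hits_closed; exact: closed_segment.
Qed.

Lemma hits_diff_E10 u1 c :
  hits [set x | 0 <= x <= u1] `\` E10 u1 u `<=` near_or_wide u1 c.
Proof.
move=> Z [Z1 notE]; have [x [Zx /andP[_ xu1]]] := Z1.
have : hits [set x | u1 < x <= u] Z by rewrite -setC_misses => Zu; exact: notE.
move=> [y [Zy /andP[/ltW u1y _]]].
exact: straddle_near_or_wide Zx xu1 Zy u1y.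
Qed.

Lemma hits_diff_E01 u1 c :
  hits [set x | u1 <= x <= u] `\` E01 u1 u `<=` near_or_wide u1 c.
Proof.
move=> Z [Zu1 notE]; have [y [Zy /andP[u1y _]]] := Zu1.
have : hits [set x | 0 <= x <= u1] Z by rewrite -setC_misses => Z1; exact: notE.
move=> [x [Zx /andP[_ xu1]]].
exact: straddle_near_or_wide Zx xu1 Zy u1y.
Qed.

End AnchorSpread.

Lemma dist_ratio_le {R : realFieldType} (a b e f : R) :
  0 <= a <= e -> 0 <= b <= f -> `|a / e - (a + b) / (e + f)| <= f / (e + f).
Proof.
move=> /andP[a0 ae] /andP[b0 bf]; have [e0|e_neq0] := eqVneq e 0.
  have -> : a = 0 by apply/eqP; rewrite eq_le a0 andbT -e0.
  rewrite e0 mul0r !add0r normrN ger0_norm; last by rewrite divr_ge0 // (le_trans b0).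
  by rewrite ler_wpM2r // invr_ge0 (le_trans b0).
have e_gt0 : 0 < e by rewrite lt_neqAle eq_sym e_neq0 (le_trans a0).
have ef_gt0 : 0 < e + f by lra.
set x := a / e; set y := (a + b) / (e + f); set z := f / (e + f).
have hx : x * e = a by rewrite /x mulfVK // gt_eqF.
have hy : y * (e + f) = a + b by rewrite /y mulfVK // gt_eqF.
have hz : z * (e + f) = f by rewrite /z mulfVK // gt_eqF.
have x0 : 0 <= x by rewrite divr_ge0 // ltW.
have x1 : x <= 1 by rewrite ler_pdivrMr // mul1r.
by rewrite ler_norml; apply/andP; split; nra.
Qed.

Section ConditionalLaws.
Context {R : realType} {d : measure_display} {T : measurableType d}
  (mu : probability T R).

Definition pr (X : set T) : R := fine (mu X).

Lemma pr_ge0 X : 0 <= pr X.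
Proof. exact/fine_ge0/measure_ge0. Qed.

Lemma pr_le X Y : measurable X -> measurable Y -> X `<=` Y -> pr X <= pr Y.
Proof.
move=> mX mY XY; apply: fine_le; [exact: fin_num_measure | exact: fin_num_measure |].
by apply: le_measure => //; rewrite inE.
Qed.

Lemma pr_setU X Y : measurable X -> measurable Y -> X `&` Y = set0 ->
  pr (X `|` Y) = pr X + pr Y.
Proof. by move=> mX mY XY; rewrite /pr measureU // fineD //; exact: fin_num_measure. Qed.

Lemma pr_setU_le X Y : measurable X -> measurable Y -> pr (X `|` Y) <= pr X + pr Y.
Proof.
move=> mX mY; rewrite /pr -fineD; try exact: fin_num_measure.
apply: fine_le; [exact/fin_num_measure/measurableU | | exact: measureU2].
by rewrite fin_numD !fin_num_measure.
Qed.

Lemma condPE E B : condP mu E B = pr (E `&` B) / pr E.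
Proof. by []. Qed.

Lemma dist_condP_subset E P B : measurable E -> measurable P -> measurable B ->
  E `<=` P -> `|condP mu E B - condP mu P B| <= pr (P `\` E) / pr P.
Proof.
move=> mE mP mB EP; have mPE : measurable (P `\` E) by exact: measurableD.
have prP : pr P = pr E + pr (P `\` E).
  rewrite -pr_setU ?setDIK //; congr pr; apply/seteqP; split => [x Px|x [/EP|[]]] //.
  by have [Ex|nEx] := pselect (E x); [left | right].
have prPB : pr (P `&` B) = pr (E `&` B) + pr ((P `\` E) `&` B).
  rewrite -pr_setU; try exact: measurableI; last by rewrite setIACA setDIK set0I.
  congr pr; rewrite -setIUl; congr (_ `&` B); apply/seteqP; split => [x Px|x [/EP|[]]] //.
  by have [Ex|nEx] := pselect (E x); [left | right].
rewrite !condPE prPB prP; apply: dist_ratio_le; rewrite pr_ge0 /=.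
  by apply: pr_le => //; exact: measurableI.
by apply: pr_le => //; exact: measurableI.
Qed.

Lemma TV_cond_law_le {d'} {T' : measurableType d'} (E P : set T) (f : T -> T') :
  measurable E -> measurable P -> E `<=` P -> measurable_fun setT f ->
  TV (cond_law mu E f) (cond_law mu P f) <= pr (P `\` E) / pr P.
Proof.
move=> mE mP EP mf; apply: ge_sup.
  by exists (`|cond_law mu E f setT - cond_law mu P f setT|), setT.
move=> _ [A mA <-]; apply: dist_condP_subset => //.
by rewrite -[X in measurable X]setTI; exact: mf.
Qed.

End ConditionalLaws.

Section LebesgueSegments.
Context {R : realType}.

Lemma lebesgue_itvcc_setI_le {a b : R} {X : set R} : measurable X -> a <= b ->
  (lebesgue_measure (`[a, b]%classic `&` X) <= (b - a)%:E)%E.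
Proof.
move=> mX ab; have -> : (b - a)%:E = lebesgue_measure `[a, b]%classic.
  rewrite lebesgue_measure_itv /= lte_fin.
  by case: ltgtP ab => // -> _; rewrite subrr.
by apply: le_measure; rewrite ?inE; [exact: measurableI | | exact: subIsetl].
Qed.

Lemma fine_lebesgue_itvcc_setI_le (a b : R) (X : set R) : measurable X -> a <= b ->
  fine (lebesgue_measure (`[a, b]%classic `&` X)) <= b - a.
Proof.
move=> mX ab; have le_ab := lebesgue_itvcc_setI_le mX ab.
rewrite -lee_fin fineK // ge0_fin_numE ?measure_ge0 //.
exact: le_lt_trans le_ab (ltry _).
Qed.

Lemma fine_lebesgue_itvcc_setI (a b : R) (X : set R) : measurable X -> a <= b ->
  `]a, b[%classic `<=` X -> fine (lebesgue_measure (`[a, b]%classic `&` X)) = b - a.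
Proof.
move=> mX ab abX; apply/le_anti; rewrite fine_lebesgue_itvcc_setI_le //=.
have le_ab := lebesgue_itvcc_setI_le mX ab.
rewrite -lee_fin fineK; last by rewrite ge0_fin_numE ?measure_ge0 // (le_lt_trans le_ab) ?ltry.
have <- : lebesgue_measure `]a, b[%classic = (b - a)%:E.
  rewrite lebesgue_measure_itv /= lte_fin.
  by case: ltgtP ab => // -> _; rewrite subrr.
apply: le_measure; rewrite ?inE; [ | exact: measurableI | ].
  exact: measurable_itv.
by move=> x abx; split; [exact: subset_itv_oo_cc | exact: abX].
Qed.

End LebesgueSegments.

Section SmallScale.
Context {R : realType} (u1 u2 u : R) (mu : probability (Ct u) R).
Hypotheses (u1_gt0 : 0 < u1) (u2_gt0 : 0 < u2) (u_split : u = u1 + u2).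
Hypothesis anchor_uniform : forall B : set R, measurable B ->
  condP mu (nonemptyC u) (anchor @^-1` B) =
  fine (lebesgue_measure (B `&` [set x : R | 0 < x < u])) / u.
Hypothesis spread_rare :
  condP mu (nonemptyC u) [set Z : Ct u | u ^+ 2 <= spread Z] <= u.

Let u_gt0 : 0 < u. Proof. by rewrite u_split addr_gt0. Qed.

Lemma pr_nonemptyC_gt0 : 0 < pr mu (nonemptyC u).
Proof.
have := @anchor_uniform setT measurableT.
rewrite condPE preimage_setT setIT setTI -set_itvoo lebesgue_measure_itv /= lte_fin.
rewrite u_gt0 /= subr0 [u / u]divff ?gt_eqF // => prN.
rewrite lt_neqAle pr_ge0 andbT eq_sym; apply/eqP => prN0.
by move: prN; rewrite prN0 invr0 mulr0 => /esym/eqP; rewrite oner_eq0.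
Qed.

Lemma pr_anchor (B : set R) : measurable B ->
  pr mu (nonemptyC u `&` anchor @^-1` B) =
  pr mu (nonemptyC u) * (fine (lebesgue_measure (B `&` [set x : R | 0 < x < u])) / u).
Proof.
move=> mB; rewrite -anchor_uniform // condPE mulrC mulfVK //.
exact/lt0r_neq0/pr_nonemptyC_gt0.
Qed.

Lemma pr_anchor_itvcc_le (a b : R) : a <= b ->
  pr mu (nonemptyC u `&` anchor @^-1` `[a, b]) <= pr mu (nonemptyC u) * ((b - a) / u).
Proof.
move=> ab; rewrite pr_anchor; last exact: measurable_itv.
rewrite ler_wpM2l ?pr_ge0 // ler_pM2r ?invr_gt0 // -set_itvoo.
exact: fine_lebesgue_itvcc_setI_le (measurable_itv _) ab.
Qed.

Lemma pr_hits_segment_ge (a b : R) : 0 <= a -> a <= b -> b <= u ->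
  pr mu (nonemptyC u) * ((b - a) / u) <= pr mu (hits [set x | a <= x <= b]).
Proof.
move=> a0 ab bu; apply: le_trans (pr_le _ _ _ _ _ (anchor_itvcc_hits a b)); last first.
- by apply: measurable_hits_closed; exact: closed_segment.
- by apply: measurable_anchor_itvcc; lra.
rewrite pr_anchor; last exact: measurable_itv.
rewrite -set_itvoo fine_lebesgue_itvcc_setI //.
by apply: subset_itv; rewrite bnd_simp.
Qed.

Lemma pr_near_or_wide_le :
  pr mu (near_or_wide u1 (u ^+ 2)) <= 2 * pr mu (nonemptyC u) * u.
Proof.
apply: le_trans (pr_setU_le mu _ _ (measurable_anchor_itvcc _ _ (ltW u1_gt0))
  (measurable_spread_ge _)) _.
have -> : 2 * pr mu (nonemptyC u) * u =
    pr mu (nonemptyC u) * ((u1 - (u1 - u ^+ 2)) / u) + pr mu (nonemptyC u) * u.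
  by field; rewrite gt_eqF.
apply: lerD; first by apply: pr_anchor_itvcc_le; rewrite gerBl sqr_ge0.
by move: spread_rare; rewrite condPE ler_pdivrMr ?pr_nonemptyC_gt0 // mulrC.
Qed.

Lemma pr_diff_ratio_le (E P : set (Ct u)) (v : R) :
  measurable E -> measurable P -> 0 < v ->
  P `\` E `<=` near_or_wide u1 (u ^+ 2) ->
  pr mu (nonemptyC u) * (v / u) <= pr mu P ->
  pr mu (P `\` E) / pr mu P <= 2 * u ^+ 2 / v.
Proof.
move=> mE mP v0 PE_near Plarge; have N0 := pr_nonemptyC_gt0.
have P0 : 0 < pr mu P by apply: lt_le_trans Plarge; rewrite mulr_gt0 ?divr_gt0.
rewrite ler_pdivrMr //; apply: le_trans (pr_le _ _ _ _ _ PE_near) _.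
- exact: measurableD.
- exact: measurable_near_or_wide (ltW u1_gt0).
apply: le_trans pr_near_or_wide_le _.
have -> : 2 * pr mu (nonemptyC u) * u = 2 * u ^+ 2 / v * (pr mu (nonemptyC u) * (v / u)).
  by field; rewrite !gt_eqF.
by rewrite ler_wpM2l // ltW // divr_gt0 // mulr_gt0 // exprn_gt0.
Qed.

Lemma TV_E10_le :
  TV (cond_law mu (E10 u1 u) (restr0 u1 u))
     (cond_law mu [set Z : Ct u | cval (restr0 u1 u Z) !=set0] (restr0 u1 u))
  <= 2 * u ^+ 2 / u1.
Proof.
have mP : measurable (@hits _ u [set x | 0 <= x <= u1]).
  by apply: measurable_hits_closed; exact: closed_segment.
rewrite restr0_nonempty; apply: le_trans (TV_cond_law_le _ _ _ _ _ _ _ _) _.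
- exact: measurable_E10.
- exact: mP.
- by move=> Z [].
- exact: measurable_restr0.
apply: pr_diff_ratio_le => //; first exact: measurable_E10.
  exact: hits_diff_E10.
have := @pr_hits_segment_ge 0 u1 (lexx 0) (ltW u1_gt0); rewrite subr0; apply.
by rewrite u_split lerDl ltW.
Qed.

Lemma TV_E01_le :
  TV (cond_law mu (E01 u1 u) (restr1 u1 u2 u))
     (cond_law mu [set Z : Ct u | cval (restr1 u1 u2 u Z) !=set0] (restr1 u1 u2 u))
  <= 2 * u ^+ 2 / u2.
Proof.
have u_le : u <= u1 + u2 by rewrite u_split.
have mP : measurable (@hits _ u [set x | u1 <= x <= u]).
  by apply: measurable_hits_closed; exact: closed_segment.
rewrite restr1_nonempty //; apply: le_trans (TV_cond_law_le _ _ _ _ _ _ _ _) _.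
- exact: measurable_E01.
- exact: mP.
- by move=> Z [].
- exact: measurable_restr1.
apply: pr_diff_ratio_le => //; first exact: measurable_E01.
  exact: hits_diff_E01.
have u1_le_u : u1 <= u by rewrite u_split lerDl ltW.
have -> : u2 = u - u1 by rewrite u_split addrC addKr.
exact: pr_hits_segment_ge (ltW u1_gt0) u1_le_u (lexx u).
Qed.

End SmallScale.

Theorem lemma4p25 (R : realType) (nu : forall t : R, probability (Ct t) R)
  (hnu : measurable_factorizing_family nu) (s t : R) (hs : 0 < s) (ht : 0 < t)
  (HA : exists u0 : R, 0 < u0 /\ forall u : R, 0 < u < u0 ->
     forall B : set R, measurable B ->
       condP (nu u) (nonemptyC u) (@anchor R u @^-1` B) =
       fine (lebesgue_measure (B `&` [set x : R | 0 < x < u])) / u)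
  (HD : exists u0 : R, 0 < u0 /\ forall u : R, 0 < u < u0 ->
     condP (nu u) (nonemptyC u) [set Z : Ct u | u ^+ 2 <= spread Z] <= u) :
  exists C : R, exists l0 : R, 0 < l0 /\ forall l : R, 0 < l < l0 ->
    let u := l * (s + t) in let u1 := l * s in let u2 := l * t in
    TV (cond_law (nu u) (E10 u1 u) (restr0 u1 u))
       (cond_law (nu u) [set Z : Ct u | cval (restr0 u1 u Z) !=set0] (restr0 u1 u))
      <= C * u /\
    TV (cond_law (nu u) (E01 u1 u) (restr1 u1 u2 u))
       (cond_law (nu u) [set Z : Ct u | cval (restr1 u1 u2 u Z) !=set0] (restr1 u1 u2 u))
      <= C * u.
Proof.
have [a [a_gt0 anchor_uniform]] := HA; have [b [b_gt0 spread_rare]] := HD.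
have st_gt0 : 0 < s + t by rewrite addr_gt0.
exists (2 * (s + t) / s + 2 * (s + t) / t), (Num.min a b / (s + t)); split.
  by rewrite divr_gt0 // lt_min a_gt0 b_gt0.
move=> l /andP[l_gt0]; rewrite ltr_pdivlMr // lt_min => /andP[ua ub] u u1 u2.
have u_gt0 : 0 < u by rewrite mulr_gt0.
have [u1_gt0 u2_gt0] : 0 < u1 /\ 0 < u2 by rewrite !mulr_gt0.
have u_split : u = u1 + u2 by rewrite /u /u1 /u2 mulrDr.
have uA : 0 < u < a by rewrite u_gt0.
have uD : 0 < u < b by rewrite u_gt0.
have h10 := TV_E10_le u1 u2 u (nu u) u1_gt0 u2_gt0 u_split
  (anchor_uniform u uA) (spread_rare u uD).
have h01 := TV_E01_le u1 u2 u (nu u) u1_gt0 u2_gt0 u_split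
  (anchor_uniform u uA) (spread_rare u uD).
have e10 : 2 * u ^+ 2 / u1 = 2 * (s + t) / s * u.
  by rewrite /u /u1; field; rewrite !gt_eqF.
have e01 : 2 * u ^+ 2 / u2 = 2 * (s + t) / t * u.
  by rewrite /u /u2; field; rewrite !gt_eqF.
have c1_ge0 : 0 <= 2 * (s + t) / s * u by rewrite !mulr_ge0 ?invr_ge0 // ltW.
have c2_ge0 : 0 <= 2 * (s + t) / t * u by rewrite !mulr_ge0 ?invr_ge0 // ltW.
rewrite mulrDl; split.
  by apply: le_trans h10 _; rewrite e10 lerDl.
by apply: le_trans h01 _; rewrite e01 lerDr.
Qed.
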